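(* Let $(X,d)$ be a compact metric space, $\Lambda$ a finite nonempty set, and $\mathcal{F}=\{X; f_{\lambda}\mid\lambda\in\Lambda\}$ a parameterized iterated function system such that each $f_\lambda:X\to X$ is continuous and surjective. If $\mathcal{F}$ has the asymptotic average shadowing property, then every point of $X$ is a chain recurrent point of $\mathcal{F}$, i.e. $CR(\mathcal{F})=X$.
   Context: For $\sigma=\{\lambda_0,\lambda_1,\dots\}\in\Lambda^{\mathbb{Z}_+}$ write $\mathcal{F}_{\sigma_n}=f_{\lambda_{n-1}}\circ\cdots\circ f_{\lambda_0}$ ($\mathcal{F}_{\sigma_0}$ the identity). A sequence $\{x_i\}_{i\ge0}$ in $X$ is an asymptotic average pseudo-orbit of $\mathcal{F}$ if there is $\sigma=\{\lambda_0,\lambda_1,\dots\}\in\Lambda^{\mathbb{Z}_+}$ with $\lim_{n\to\infty}\frac1n\sum_{i=0}^{n-1}d(f_{\lambda_i}(x_i),x_{i+1})=0$; it is asymptotically shadowed in average by $z\in X$ if there is $\sigma\in\Lambda^{\mathbb{Z}_+}$ with $\lim_{n\to\infty}\frac1n\sum_{i=0}^{n-1}d(\mathcal{F}_{\sigma_i}(z),x_i)=0$. $\mathcal{F}$ has the asymptotic average shadowing property if every asymptotic average pseudo-orbit is asymptotically shadowed in average by some point of $X$. A point $x\in X$ is chain recurrent for $\mathcal{F}$ if for every $\epsilon>0$ there are points $x=p_0,p_1,\dots,p_n=x$ ($n\ge1$) and indices $\lambda_0,\dots,\lambda_{n-1}\in\Lambda$ with $d(f_{\lambda_i}(p_i),p_{i+1})\le\epsilon$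 for all $0\le i<n$. $CR(\mathcal{F})$ denotes the set of chain recurrent points of $\mathcal{F}$. *)

From HB Require Import structures.
From mathcomp Require Import all_boot all_order all_algebra.
From mathcomp Require Import all_classical all_reals all_analysis.
Set Implicit Arguments. Unset Strict Implicit. Unset Printing Implicit Defensive.
Import Order.TTheory GRing.Theory Num.Theory.
Import numFieldNormedType.Exports.
Local Open Scope classical_set_scope.
Local Open Scope ring_scope.

Section IFS.
Context {R : realType} {X : metricType R} {L : Type}.
Variable f : L -> X -> X.

Fixpoint Fsigma (sigma : nat -> L) (n : nat) (x : X) : X :=
  match n with
  | 0 => x
  | n'.+1 => f (sigma n') (Fsigma sigma n' x)
  end.

Definition cesaro (u : nat -> R) : nat -> R :=
  fun n => n%:R^-1 * \sum_(i < n) u i.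

Definition asymptotic_average_pseudo_orbit (xs : nat -> X) : Prop :=
  exists sigma : nat -> L,
    cesaro (fun i => mdist (f (sigma i) (xs i)) (xs i.+1)) @ \oo --> 0.

Definition asymptotically_shadowed_in_average (xs : nat -> X) (z : X) : Prop :=
  exists sigma : nat -> L,
    cesaro (fun i => mdist (Fsigma sigma i z) (xs i)) @ \oo --> 0.

Definition asymptotic_average_shadowing_property : Prop :=
  forall xs : nat -> X, asymptotic_average_pseudo_orbit xs ->
    exists z : X, asymptotically_shadowed_in_average xs z.

Definition chain_recurrent (x : X) : Prop :=
  forall eps : R, 0 < eps ->
    exists (n : nat) (p : nat -> X) (lam : nat -> L),
      (0 < n)%N /\ p 0%N = x /\ p n = x /\
      (forall i, (i < n)%N -> mdist (f (lam i) (p i)) (p i.+1) <= eps).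

Definition CR : set X := [set x | chain_recurrent x].
End IFS.

(* Fix x, eps > 0, an index l and a right inverse g of f_l.  The
   sequence that, on each block 2^k <= i+1 < 2^(k+1) of indices, follows the
   f_l-orbit of g^(2^(k-1)) x is an exact orbit except at the block boundaries,
   of which there are O(log n) among the first n indices; since X is bounded it
   is an asymptotic average pseudo-orbit.  A point z shadowing it in average
   is eps-close to it along a set of indices of density one, hence at an index
   i late in one block, after the sequence has passed x, and at an index j
   early in the next block, before it reaches x again.  Following f_l from x
   to the i-th term, then the orbit of z from i to j, then f_l from the j-th
   term back to x is an eps-chain from x to itself. *)

From Pilot Require Import Defs.
From HB Require Import structures.
From mathcomp Require Import all_boot all_order all_algebra.
From mathcomp Require Import all_classical all_reals all_analysis.
From mathcomp Require Import zify lra.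
Import Order.TTheory GRing.Theory Num.Theory.
Local Open Scope classical_set_scope.
Local Open Scope ring_scope.
Set Implicit Arguments.
Unset Strict Implicit.

Section Chains.
Variables (R : realType) (X : metricType R) (L : Type) (f : L -> X -> X).

Inductive chain (eps : R) : X -> X -> Prop :=
| chain1 x y l : mdist (f l x) y <= eps -> chain eps x y
| chainS x y w l : mdist (f l x) y <= eps -> chain eps y w -> chain eps x w.

Lemma chain_trans eps x y w : chain eps x y -> chain eps y w -> chain eps x w.
Proof.
elim=> [{}x {}y l xy|{}x {}y w' l xy _ IH] yw; first exact: chainS xy yw.
exact: chainS xy (IH yw).
Qed.

Lemma chain_sequence eps x y : chain eps x y ->
  exists (n : nat) (p : nat -> X) (lam : nat -> L),
    (0 < n)%N /\ p 0%N = x /\ p n = y /\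
    (forall i, (i < n)%N -> mdist (f (lam i) (p i)) (p i.+1) <= eps).
Proof.
elim=> [{}x {}y l xy|{}x {}y w l xy _ [n [p [lam [n0 [p0 [pn pS]]]]]]].
  exists 1%N, (fun i => if i is 0%N then x else y), (fun _ => l).
  by do 3!split=> //; case.
exists n.+1, (fun i => if i is k.+1 then p k else x),
  (fun i => if i is k.+1 then lam k else l).
by do 3!split=> //; case=> [|i] /=; [rewrite p0 | exact: pS].
Qed.

Lemma chain_recurrentP x : (forall eps, 0 < eps -> chain eps x x) ->
  chain_recurrent f x.
Proof. by move=> xx eps /xx /chain_sequence. Qed.

Lemma chain_along_orbit eps (p : nat -> X) (lam : nat -> L) y i j :
  0 <= eps -> (forall k, p k.+1 = f (lam k) (p k)) ->
  (i < j)%N -> mdist (p j) y <= eps -> chain eps (p i) y.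
Proof.
move=> e0 pS /subnKC <-; move: (j - i.+1)%N => d.
elim: d i => [|d IH] i piy.
  by apply: (@chain1 _ _ _ (lam i)); rewrite -pS -(addn0 i.+1).
apply: (@chainS _ _ (p i.+1) _ (lam i)); first by rewrite pS mdistxx.
by apply: IH; rewrite addSnnS.
Qed.

Lemma chain_along_iter eps l u y n : 0 <= eps -> (0 < n)%N ->
  mdist (iter n (f l) u) y <= eps -> chain eps u y.
Proof.
move=> e0 n0 uy.
apply: (chain_along_orbit (p := fun k => iter k (f l) u) (lam := fun=> l) (i := 0)
  e0 _ n0 uy).
by move=> k; rewrite iterS.
Qed.

Lemma chain_loop_through_orbit eps l (sig : nat -> L) x y z i j a b :
  0 <= eps -> (0 < a)%N -> (i < j)%N -> (0 < b)%N ->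
  mdist (iter a (f l) x) (Fsigma f sig i z) <= eps ->
  mdist (Fsigma f sig j z) y <= eps -> iter b (f l) y = x ->
  chain eps x x.
Proof.
move=> e0 a0 ij b0 xi jy yx.
apply: (chain_trans (chain_along_iter e0 a0 xi)).
apply: (chain_trans (chain_along_orbit (p := Fsigma f sig ^~ z) e0 _ ij jy)) => //.
by apply: (chain_along_iter (l := l) e0 b0); rewrite yx mdistxx.
Qed.

End Chains.

Lemma compact_mdist_bounded (R : realType) (X : metricType R) :
  compact [set: X] -> exists D : R, forall y y' : X, mdist y y' <= D.
Proof.
case: (pselect (exists x0 : X, True)) => [[x0 _]|noX]; last first.
  by move=> _; exists 0 => y; case: noX; exists y.
move=> /compact_near_coveringP /(_ nat \oo (fun n y => mdist x0 y < n%:R)) [].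
- move=> x _; exists (ball x 1, [set n : nat | mdist x0 x + 1 < n%:R]).
    split; first exact: nbhsx_ballx.
    exists (Num.Def.archi_bound (mdist x0 x + 1)) => // n /= bn.
    apply: lt_le_trans (archi_boundP _) _; first by rewrite addr_ge0 ?mdist_ge0.
    by rewrite ler_nat.
  case=> y n /= [xy xn]; rewrite ballEmdist /= in xy.
  by apply: le_lt_trans (metric_triangle _ x _) _; lra.
move=> N _ HN; exists (N%:R + N%:R) => y y'.
have := HN N (leqnn N) y I; have := HN N (leqnn N) y' I => /= y'N yN.
by apply: le_trans (metric_triangle _ x0 _) _; rewrite metric_sym; lra.
Qed.

Lemma cesaro_cvg0_window (R : realType) (u : nat -> R) (c : nat) (eps : R) :
  0 < eps -> (forall i, 0 <= u i) -> Defs.cesaro u @ \oo --> 0 ->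
  exists N, forall lo hi : nat, (N <= hi)%N -> (hi <= c * (hi - lo))%N ->
    exists2 i, (lo <= i < hi)%N & u i < eps.
Proof.
move=> e0 u0 /cvgrPdist_lt /(_ (eps / c.+1%:R)) [].
  by rewrite divr_gt0.
move=> N _ uN; exists N.+1 => lo hi Nhi hic.
apply: contrapT => small.
have big i : (lo <= i < hi)%N -> eps <= u i.
  by move=> ?; rewrite leNgt; apply/negP => ?; apply: small; exists i.
have hi0 : 0 < hi%:R :> R by rewrite ltr0n; lia.
have := uN hi (ltnW Nhi); rewrite /Defs.cesaro sub0r normrN ger0_norm; last first.
  by rewrite mulr_ge0 ?sumr_ge0 // invr_ge0 ltW.
apply/negP; rewrite -leNgt ler_pdivlMl // mulrA ler_pdivrMr ?ltr0n //.
have window : eps *+ (hi - lo) <= \sum_(i < hi) u i.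
  rewrite -sumr_const_nat -(big_mkord xpredT u).
  rewrite [X in _ <= X](@big_cat_nat _ _ _ lo) //=; last by lia.
  by rewrite -[X in X <= _]add0r lerD ?sumr_ge0 //; apply: ler_sum_nat.
apply: le_trans (ler_wpM2r (ler0n _ c.+1) window).
by rewrite -[eps *+ _]mulr_natl mulrAC -natrM ler_pM2r // ler_nat; lia.
Qed.

Lemma trunc_log2_mul_le M n : (2 ^ M * trunc_log 2 n <= 2 ^ M * M + n)%N.
Proof.
case: n => [|n]; first by rewrite trunc_log0 muln0.
have := trunc_logP (isT : (1 < 2)%N) (ltn0Sn n).
set t := trunc_log 2 n.+1 => tn.
have [tM|Mt] := leqP t M.
  by apply: leq_trans (leq_addr _ _); rewrite leq_mul2l tM orbT.
rewrite -(subnKC (ltnW Mt)) mulnDr leq_add2l; apply: leq_trans tn.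
rewrite -{2}(subnKC (ltnW Mt)) expnD leq_mul2l.
by apply/orP; right; exact/ltnW/ltn_expl.
Qed.

Lemma trunc_log2_div_cvg0 (R : realType) :
  (fun n => (trunc_log 2 n.+1)%:R / n%:R : R) @ \oo --> 0.
Proof.
apply/cvgrPdist_lt => eps e0.
pose M := Num.Def.archi_bound (4 / eps).
have PM : 4 / eps < (2 ^ M)%:R by rewrite natrX; apply: upper_nthrootP.
have [N MN] : exists N : nat, 2 * M%:R / eps < N%:R.
  exists (Num.Def.archi_bound (2 * M%:R / eps)); apply: archi_boundP.
  by rewrite divr_ge0 ?mulr_ge0 // ltW.
exists N.+1 => // n /= Nn; set t := trunc_log 2 n.+1.
have n0 : 0 < n%:R :> R by rewrite ltr0n; lia.
rewrite sub0r normrN ger0_norm ?divr_ge0 // ltr_pdivrMr //.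
have tP := trunc_log2_mul_le M n.+1; rewrite -/t -(ler_nat R) !natrD !natrM in tP.
rewrite -[n.+1]addn1 natrD in tP.
set P := (2 ^ M)%N in PM tP; have P0 : 0 < P%:R :> R by rewrite ltr0n expn_gt0.
rewrite -(ltr_pM2l P0).
have Mn : 2 * M%:R < eps * n%:R.
  rewrite -ltr_pdivrMl // mulrC; apply: lt_le_trans MN _; rewrite ler_nat; lia.
have Pe : 4 < eps * P%:R by rewrite -ltr_pdivrMl // mulrC.
have n1 : 1 <= n%:R :> R by rewrite ler1n; lia.
have MnP : 2 * M%:R * P%:R < eps * n%:R * P%:R by rewrite ltr_pM2r.
have Pen : 4 * n%:R < eps * P%:R * n%:R by rewrite ltr_pM2r.
lra.
Qed.

Lemma cesaro_cvg0_increments (R : realType) (e a : nat -> R) :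
  (forall i, 0 <= e i) -> (forall i, e i <= a i.+1 - a i) -> 0 <= a 0 ->
  (fun n => a n / n%:R) @ \oo --> 0 -> Defs.cesaro e @ \oo --> 0.
Proof.
move=> e0 ea a0 an.
apply: (@squeeze_cvgr _ _ _ _ (fun=> 0) (fun n => a n / n%:R) _ _ _ (cvg_cst 0) an).
apply: nearW => n.
rewrite /Defs.cesaro mulr_ge0 ?sumr_ge0 ?invr_ge0 //= mulrC ler_wpM2r ?invr_ge0 //.
rewrite -(big_mkord xpredT) -(subr0 (a n)); apply: le_trans (lerB (lexx _) a0).
by rewrite -telescope_sumr // ler_sum_nat.
Qed.

Lemma trunc_log2_block k i : (2 * 2 ^ k <= i.+1 < 4 * 2 ^ k)%N ->
  trunc_log 2 i.+1 = k.+1.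
Proof. by move=> ik; apply: trunc_log_eq => //; rewrite !expnS; lia. Qed.

Section ReturningOrbit.
Variables (T : Type) (h g : T -> T) (x : T).
Hypothesis hgK : cancel g h.

(* On the block 2^k <= i+1 < 2^(k+1) this follows the h-orbit of g^(2^(k-1)) x,
   which passes through x at i+1 = 3 * 2^(k-1). *)
Definition returning_orbit (i : nat) : T :=
  let k := trunc_log 2 i.+1 in iter (i.+1 - 2 ^ k) h (iter (2 ^ k.-1) g x).

Lemma iter_cancel n : iter n h (iter n g x) = x.
Proof. by elim: n => // n IH; rewrite [iter n.+1 g x]iterS iterSr hgK. Qed.

Lemma returning_orbit_step i : trunc_log 2 i.+2 = trunc_log 2 i.+1 ->
  h (returning_orbit i) = returning_orbit i.+1.
Proof.
move=> k; have := trunc_logP (isT : (1 < 2)%N) (ltn0Sn i).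
by rewrite /returning_orbit k => /subSn ->.
Qed.

Lemma returning_orbit_late k i : (3 * 2 ^ k <= i.+1 < 4 * 2 ^ k)%N ->
  returning_orbit i = iter (i.+1 - 3 * 2 ^ k) h x.
Proof.
move=> ik; rewrite /returning_orbit (@trunc_log2_block k) /=; last by lia.
by rewrite (_ : _ - _ = i.+1 - 3 * 2 ^ k + 2 ^ k)%N ?iterD ?iter_cancel ?expnS //; lia.
Qed.

Lemma returning_orbit_early k i : (2 * 2 ^ k <= i.+1 <= 3 * 2 ^ k)%N ->
  iter (3 * 2 ^ k - i.+1) h (returning_orbit i) = x.
Proof.
move=> ik; rewrite /returning_orbit (@trunc_log2_block k) /=; last by lia.
by rewrite -iterD (_ : _ + _ = 2 ^ k)%N ?iter_cancel ?expnS //; lia.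
Qed.

End ReturningOrbit.

Lemma returning_orbit_pseudo_orbit (R : realType) (X : metricType R) (L : Type)
    (f : L -> X -> X) l g (x : X) :
  compact [set: X] -> cancel g (f l) ->
  asymptotic_average_pseudo_orbit f (returning_orbit (f l) g x).
Proof.
move=> cX gK; have [D XD] := compact_mdist_bounded cX.
have D0 : 0 <= D := le_trans (mdist_ge0 x x) (XD x x).
exists (fun=> l).
apply: (@cesaro_cvg0_increments _ _ (fun n => D * (trunc_log 2 n.+1)%:R)).
- by move=> i; apply: mdist_ge0.
- move=> i; rewrite -mulrBr.
  have [tS|tS] := eqVneq (trunc_log 2 i.+2) (trunc_log 2 i.+1).
    by rewrite (returning_orbit_step (f l) g x tS) mdistxx tS subrr mulr0.
  have tlt : (trunc_log 2 i.+1 < trunc_log 2 i.+2)%N.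
    by rewrite ltn_neqAle eq_sym tS leq_trunc_log.
  apply: le_trans (XD _ _) _.
  by rewrite ler_peMr // -natrB ?ler1n ?subn_gt0 // ltnW.
- by rewrite mulr_ge0.
- rewrite -(mulr0 D) (_ : (fun n => _) = (fun n => D * ((trunc_log 2 n.+1)%:R / n%:R))).
    by apply: cvgMl_tmp; apply: trunc_log2_div_cvg0.
  by apply: funext => n; rewrite mulrA.
Qed.

Theorem mainTheorem5 (R : realType) (X : metricType R) (L : finType)
  (f : L -> X -> X) :
  compact [set: X] ->
  (0 < #|L|)%N ->
  (forall l, continuous (f l)) ->
  (forall l (y : X), exists x : X, f l x = y) ->
  asymptotic_average_shadowing_property f ->
  CR f = [set: X].
Proof.
move=> cX /card_gt0P [l _] _ fsurj aasp.
apply/seteqP; split=> // x _; apply: chain_recurrentP => eps e0.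
have [g gK] := choice (fsurj l).
have [z [sig shadow]] := aasp _ (returning_orbit_pseudo_orbit x cX gK).
have [N small] := cesaro_cvg0_window 8 e0 (fun i => mdist_ge0 _ _) shadow.
have N_lt_exp : (N.+1 < 2 ^ N.+1)%N := ltn_expl N.+1 (isT : (1 < 2)%N).
have expSN : (2 ^ N.+2 = 2 * 2 ^ N.+1)%N by rewrite expnS.
have [i /andP[iP Pi] zi] :=
  small (3 * 2 ^ N.+1)%N (4 * 2 ^ N.+1)%N.-1 ltac:(lia) ltac:(lia).
have [j /andP[Pj jP] zj] :=
  small (4 * 2 ^ N.+1)%N.-1 (6 * 2 ^ N.+1)%N.-1 ltac:(lia) ltac:(lia).
have xi : returning_orbit (f l) g x i = iter (i.+1 - 3 * 2 ^ N.+1)%N (f l) x.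
  by apply: (returning_orbit_late _ gK); lia.
have xz : mdist (iter (i.+1 - 3 * 2 ^ N.+1)%N (f l) x) (Fsigma f sig i z) <= eps.
  by rewrite -xi metric_sym ltW.
have jx : iter (3 * 2 ^ N.+2 - j.+1)%N (f l) (returning_orbit (f l) g x j) = x.
  by apply: (returning_orbit_early _ gK); lia.
by apply: (chain_loop_through_orbit (ltW e0) _ _ _ xz (ltW zj) jx); lia.
Qed.
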